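(* Let $a,b\in\mathbb{Q}_3$ with $\gamma(a)=m\ge4$, $\gamma(b)=0$ and $(b_0,b_1)=(1,0)$ or $(2,2)$. Then $x=\sum_{k\ge0}x_k3^k\in\mathbb{Z}_3^*$ is a solution of $x^3+ax=b$ if and only if the congruences $$x_0^3\equiv b_0\pmod3,\qquad x_0^3\equiv b_0+3b_1\pmod9,$$ $$x_0^2x_1+M_1(x_0)\equiv b_2\pmod3,$$ $$x_0^2x_2+P_3^2(x_0,x_1)+x_0x_1^2+M_2(x_0,x_1)\equiv b_3\pmod3,$$ $$x_0^2x_{k-1}+P_k^{k-1}(x_0,\dots,x_{k-2})+2x_0x_1x_{k-2}\equiv b_k\pmod3,\quad 4\le k\le m-1,$$ $$x_0^2x_{m-1}+P_m^{m-1}(x_0,\dots,x_{m-2})+2x_0x_1x_{m-2}+x_0a_0\equiv b_m\pmod3,$$ $$x_0^2x_{k-1}+P_k^{k-1}(x_0,\dots,x_{k-2})+2x_0x_1x_{k-2}+x_{k-m}a_0+\dots+x_0a_{k-m}\equiv b_k\pmod3,\quad k\ge m+1,$$ are fulfilled, where the integers $M_k(x_0,\dots,x_{k-1})$ are defined by $$x_0^3=b_0+3b_1+9M_1(x_0),$$ $$x_0^2x_1=b_2-M_1(x_0)+3M_2(x_0,x_1),$$ $$x_0^2x_2+P_3^2(x_0,x_1)+x_0x_1^2=b_3-M_2(x_0,x_1)+3M_3(x_0,x_1,x_2),$$ $$x_0^2x_{k-1}+P_k^{k-1}(x_0,\dots,x_{k-2})+2x_0x_1x_{k-2}=b_k-M_{k-1}(x_0,\dots,x_{k-2})+3M_k(x_0,\dots,x_{k-1}),\quad4\le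 k\le m-1,$$ $$x_0^2x_{m-1}+P_m^{m-1}(x_0,\dots,x_{m-2})+2x_0x_1x_{m-2}+x_0a_0=b_m-M_{m-1}(x_0,\dots,x_{m-2})+3M_m(x_0,\dots,x_{m-1}),$$ $$x_0^2x_{k-1}+P_k^{k-1}(x_0,\dots,x_{k-2})+2x_0x_1x_{k-2}+x_{k-m}a_0+\dots+x_0a_{k-m}=b_k-M_{k-1}(x_0,\dots,x_{k-2})+3M_k(x_0,\dots,x_{k-1}),\quad k\ge m+1.$$
   Context: Write $a=3^{\gamma(a)}(a_0+a_13+a_23^2+\dots)$, $b=3^{\gamma(b)}(b_0+b_13+b_23^2+\dots)$ in canonical form, with digits $a_j,b_j\in\{0,1,2\}$, $a_0,b_0\ne0$, $\gamma(a),\gamma(b)\in\mathbb{Z}$. $\mathbb{Z}_3^*$ is the set of $3$-adic units; $x\in\mathbb{Z}_3^*$ is written $x=x_0+x_13+x_23^2+\dots$ with $x_j\in\{0,1,2\}$, $x_0\ne0$. For $j\le k$, $P_k^j(x_0,\dots,x_{j-1})=\sum\frac{6}{m_0!\cdots m_{j-1}!}x_0^{m_0}\cdots x_{j-1}^{m_{j-1}}$, the sum over nonnegative integers $m_0,\dots,m_{j-1}$ with $\sum_{i=0}^{j-1}m_i=3$ and $\sum_{i=1}^{j-1}im_i=k$. *)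

From mathcomp Require Import all_boot all_order all_algebra.
Set Implicit Arguments. Unset Strict Implicit. Unset Printing Implicit Defensive.
Import Order.TTheory GRing.Theory Num.Theory.
Local Open Scope ring_scope.

(* A 3-adic digit sequence: d k in {0,1,2} for all k.  A 3-adic number with
   valuation g and canonical digits d is 3^g * (d 0 + d 1 * 3 + d 2 * 3^2 + ...). *)
Definition digits3 (d : nat -> nat) : Prop := forall k, (d k < 3)%N.

Definition trunc3 (d : nat -> nat) (N : nat) : int :=
  \sum_(k < N) (d k)%:Z * 3 ^+ k.

(* x^3 + a x = b in Z_3 (hence in Q_3), where
   a = 3^m (a_0 + a_1 3 + ...), b = b_0 + b_1 3 + ..., x = x_0 + x_1 3 + ...
   Equality in Z_3 = lim Z/3^N Z is equality modulo 3^N for every N. *)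
Definition cubic_sol3 (m : nat) (a b x : nat -> nat) : Prop :=
  forall N : nat,
    (trunc3 x N ^+ 3 + 3 ^+ m * trunc3 a N * trunc3 x N
       = trunc3 b N %[mod (3 ^+ N : int)])%Z.

(* Since sum m_i = 3, each m_i <= 3, so the m_i range over 'I_4 without loss;
   6/(m_0!...m_{j-1}!) is an integer (exact division). *)
Definition Pkj (k j : nat) (x : nat -> nat) : int :=
  \sum_(mu : {ffun 'I_j -> 'I_4} |
          ((\sum_(i < j) (mu i : nat))%N == 3%N) &&
          ((\sum_(i < j | (1 <= i)%N) (i * mu i)%N)%N == k))
     ((6 %/ (\prod_(i < j) (mu i)`!))%N%:Z * \prod_(i < j) (x i)%:Z ^+ (mu i : nat)).

Definition Lhs (m : nat) (a x : nat -> nat) (k : nat) : int :=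
  let X i := (x i)%:Z in
  if k == 2%N then X 0%N ^+ 2 * X 1%N
  else if k == 3%N then X 0%N ^+ 2 * X 2%N + Pkj 3 2 x + X 0%N * X 1%N ^+ 2
  else X 0%N ^+ 2 * X k.-1 + Pkj k k.-1 x + 2 * X 0%N * X 1%N * X (k - 2)%N
       + (if (m <= k)%N then
            \sum_(i < (k - m).+1) X (k - m - i)%N * (a i)%:Z
          else 0).

(* The integers M_k(x_0,...,x_{k-1}), k >= 1:
     x_0^3 = b_0 + 3 b_1 + 9 M_1,
     Lhs_k = b_k - M_{k-1} + 3 M_k   (k >= 2).
   (Euclidean integer division; exact whenever the preceding congruences hold.) *)
Fixpoint Mk (m : nat) (a b x : nat -> nat) (k : nat) : int :=
  match k with
  | 0%N => 0
  | 1%N => (((x 0%N)%:Z ^+ 3 - (b 0%N)%:Z - 3 * (b 1%N)%:Z) %/ 9)%Z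
  | S k' => ((Lhs m a x k - (b k)%:Z + Mk m a b x k') %/ 3)%Z
  end.

Definition congruences36 (m : nat) (a b x : nat -> nat) : Prop :=
  ((x 0%N)%:Z ^+ 3 = (b 0%N)%:Z %[mod 3])%Z /\
  ((x 0%N)%:Z ^+ 3 = (b 0%N)%:Z + 3 * (b 1%N)%:Z %[mod 9])%Z /\
  (forall k : nat, (2 <= k)%N ->
     (Lhs m a x k + Mk m a b x k.-1 = (b k)%:Z %[mod 3])%Z).

From mathcomp Require Import all_boot all_order all_algebra zify ring.
Import Order.TTheory GRing.Theory Num.Theory.
Set Implicit Arguments. Unset Strict Implicit. Unset Printing Implicit Defensive.
Local Open Scope ring_scope.

(* Read the digit sequences as polynomials in t evaluated at t = 3.  The t^k
   coefficient of the cube of x_0 + ... + x_k t^k is 3 * carry_k + local_k, where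
   carry_(k-1) + local_k are exactly the cubic terms of the k-th congruence, and
   3^m a x contributes the convolution x_(k-m) a_0 + ... + x_0 a_(k-m) to digit k.
   Hence x^3 + a x - b = sum_k (Lhs_k - b_k) 3^k modulo every 3^N.  A digit series
   is divisible by every 3^N iff each digit plus the incoming carry M_(k-1) is
   divisible by 3, the quotient being the next carry M_k. *)

Definition digitp (x : nat -> nat) (J : nat) : {poly int} :=
  \sum_(i < J) (x i)%:Z *: 'X^i.

Lemma digitpS x J : digitp x J.+1 = digitp x J + (x J)%:Z *: 'X^J.
Proof. by rewrite /digitp big_ord_recr. Qed.

Lemma coef_digitp x J i : (digitp x J)`_i = if (i < J)%N then (x i)%:Z else 0.
Proof.
elim: J => [|J IH]; first by rewrite /digitp big_ord0 coef0.
rewrite digitpS coefD IH coefZ coefXn.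
case: (ltngtP i J) => [h|h|->]; rewrite ?mulr0 ?mulr1 ?addr0 ?add0r ltnS.
- by rewrite ltnW.
- by rewrite leqNgt h.
- by rewrite leqnn.
Qed.

Lemma horner_digitp x N : (digitp x N).[3] = trunc3 x N.
Proof.
rewrite /trunc3 /digitp horner_sum; apply: eq_bigr => i _.
by rewrite hornerZ hornerXn.
Qed.

Definition multinomial_sum (x : nat -> nat) (s k J : nat) : int :=
  \sum_(mu : {ffun 'I_J -> 'I_4} |
          ((\sum_(i < J) (mu i : nat))%N == s) &&
          ((\sum_(i < J) (i * mu i)%N)%N == k))
     ((s`! %/ (\prod_(i < J) (mu i)`!))%N%:Z * \prod_(i < J) (x i)%:Z ^+ (mu i : nat)).

Lemma prod_fact_dvdn_fact_sum J (F : 'I_J -> nat) :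
  (\prod_(i < J) (F i)`! %| (\sum_(i < J) F i)`!)%N.
Proof.
elim: J F => [|J IH] F; first by rewrite !big_ord0.
rewrite !big_ord_recr /= -(@bin_fact (_ + F ord_max) (F ord_max)) ?leq_addl //.
by rewrite addnK mulnCA [X in (_ %| X)%N]mulnC dvdn_pmul2r ?fact_gt0 // dvdn_mull.
Qed.

Lemma divn_fact_mul s t P : (t <= s)%N -> (P %| (s - t)`!)%N ->
  (s`! %/ (P * t`!) = 'C(s, t) * ((s - t)`! %/ P))%N.
Proof.
move=> ts dvdP; have P_gt0 : (0 < P)%N by apply: dvdn_gt0 dvdP; exact: fact_gt0.
rewrite -(bin_fact ts) -(divnK dvdP) mulnK //.
rewrite [X in (X %/ _)%N](_ : _ = 'C(s, t) * ((s - t)`! %/ P) * (P * t`!))%N; last by ring.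
by rewrite mulnK // muln_gt0 P_gt0 fact_gt0.
Qed.

Section FfunSnoc.
Variables (J : nat) (T : finType).

Definition ffun_snoc (p : {ffun 'I_J -> T} * T) : {ffun 'I_J.+1 -> T} :=
  [ffun i => if unlift ord_max i is Some j then p.1 j else p.2].

Definition ffun_unsnoc (f : {ffun 'I_J.+1 -> T}) : {ffun 'I_J -> T} * T :=
  ([ffun j => f (lift ord_max j)], f ord_max).

Lemma ffun_snoc_bij : bijective ffun_snoc.
Proof.
exists ffun_unsnoc => [[f t]|f].
- by congr pair; rewrite ?ffunE ?unlift_none //; apply/ffunP => j; rewrite !ffunE liftK.
- by apply/ffunP => i; rewrite ffunE; case: unliftP => [j ->|->]; rewrite ?ffunE.
Qed.

Lemma ffun_snoc_widen p (i : 'I_J) : ffun_snoc p (widen_ord (leqnSn J) i) = p.1 i.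
Proof.
have -> : widen_ord (leqnSn J) i = lift ord_max i.
  by apply: val_inj; rewrite /= /bump leqNgt ltn_ord.
by rewrite ffunE liftK.
Qed.

Lemma ffun_snoc_max p : ffun_snoc p ord_max = p.2.
Proof. by rewrite ffunE unlift_none. Qed.

Lemma big_ffun_snoc R idx (op : Monoid.law idx) (F : nat -> T -> R) p :
  \big[op/idx]_(i < J.+1) F i (ffun_snoc p i) = op (\big[op/idx]_(i < J) F i (p.1 i)) (F J p.2).
Proof.
rewrite big_ord_recr ffun_snoc_max; congr (op _ _).
by apply: eq_bigr => i _; rewrite ffun_snoc_widen.
Qed.

Lemma sum_ffun_snoc (V : nmodType) (G : {ffun 'I_J.+1 -> T} -> V) :
  \sum_f G f = \sum_(f : {ffun 'I_J -> T}) \sum_(t : T) G (ffun_snoc (f, t)).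
Proof.
rewrite (reindex ffun_snoc); last exact/onW_bij/ffun_snoc_bij.
by rewrite (pair_bigA _ (fun f t => G (ffun_snoc (f, t)))).
Qed.

End FfunSnoc.

Lemma multinomial_sumS x s k J : multinomial_sum x s k J.+1 =
  \sum_(t < 4) (if (t <= s)%N && (J * t <= k)%N then
      'C(s, t)%:Z * (x J)%:Z ^+ t * multinomial_sum x (s - t) (k - J * t) J else 0).
Proof.
rewrite /multinomial_sum big_mkcond sum_ffun_snoc exchange_big /=; apply: eq_bigr => t _.
under eq_bigr => f _ do rewrite (big_ffun_snoc addn (fun _ (v : 'I_4) => v : nat))
  (big_ffun_snoc addn (fun i (v : 'I_4) => i * v)%N) (big_ffun_snoc muln (fun _ (v : 'I_4) => v`!))
  (big_ffun_snoc *%R (fun i (v : 'I_4) => (x i)%:Z ^+ v)) /=.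
case: ifP => [/andP[ts jk] | tsk]; last first.
  apply: big1 => f _; case: ifP => // /andP[/eqP Es /eqP Ek].
  by move: tsk; rewrite -Es -Ek !leq_addl.
rewrite mulr_sumr [RHS]big_mkcond; apply: eq_bigr => f _.
rewrite -(eqn_add2r t _ (s - t)) -(eqn_add2r (J * t) _ (k - J * t)) !subnK //.
case: ifP => // /andP[/eqP Es _].
rewrite divn_fact_mul -?Es ?addnK ?prod_fact_dvdn_fact_sum ?leq_addl // PoszM; ring.
Qed.

Lemma multinomial_sum0 x s k : multinomial_sum x s k 0 = ((s == 0%N) && (k == 0%N))%:R.
Proof.
rewrite /multinomial_sum.
under eq_bigl => mu do rewrite !big_ord0 ![(0 == _)%N]eq_sym.
under eq_bigr => mu _ do rewrite !big_ord0 divn1 mulr1.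
case: andP => [[/eqP-> _]|_]; last by rewrite big_pred0.
by rewrite big_const card_ffun !card_ord.
Qed.

(* Only the exponents s <= 3 are covered, as the multi-indices range over 'I_4. *)
Lemma coef_digitp_exp x J s k : (s <= 3)%N ->
  ((digitp x J) ^+ s)`_k = multinomial_sum x s k J.
Proof.
elim: J s k => [|J IH] s k s_le3.
  rewrite multinomial_sum0 /digitp big_ord0 expr0n.
  by case: s {s_le3} => [|s]; rewrite ?coef1 ?coef0.
rewrite digitpS exprDn coef_sum multinomial_sumS.
rewrite (big_ord_widen 4 (fun t =>
  ((digitp x J ^+ (s - t) * ((x J)%:Z *: 'X^J) ^+ t) *+ 'C(s, t))`_k)) //.
rewrite big_mkcond /=; apply: eq_bigr => t _.
rewrite ltnS; case: (leqP t s) => ts //=.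
rewrite coefMn exprZn -exprM -scalerAr coefZ coefMXn.
case: (leqP (J * t) k) => jk; last by rewrite mulr0 mul0rn.
rewrite IH ?(leq_trans (leq_subr _ _)) //.
by rewrite -mulr_natl mulrA natz.
Qed.

Lemma Pkj_coef x k j : Pkj k j x = ((digitp x j) ^+ 3)`_k.
Proof.
rewrite coef_digitp_exp // /Pkj /multinomial_sum; apply: eq_bigl => mu.
by congr (_ && (_ == _)); rewrite big_mkcond; apply: eq_bigr => -[[|i] hi].
Qed.

Lemma dvdz_sum_tail (d : int) (F : nat -> int) n N : (n <= N)%N ->
  (forall i, (n <= i)%N -> (d %| F i)%Z) ->
  (d %| \sum_(i < N) F i - \sum_(i < n) F i)%Z.
Proof.
move=> le_nN dvdF; rewrite -!(big_mkord xpredT) (big_cat_nat _ le_nN) //= addrC addrK.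
by rewrite big_nat_cond; apply: rpred_sum => i /andP[/andP[/dvdF]].
Qed.

Lemma dvdz_horner_trunc (p : {poly int}) (c : int) N :
  (c ^+ N %| p.[c] - \sum_(i < N) p`_i * c ^+ i)%Z.
Proof.
rewrite (@horner_coef_wide _ (maxn N (size p))) ?leq_maxr //.
apply: (@dvdz_sum_tail _ (fun i => p`_i * c ^+ i)); first exact: leq_maxl.
by move=> i le_Ni; apply/dvdz_mull/dvdz_exp2l.
Qed.

Lemma take_digitp x n N : (n <= N)%N -> take_poly n (digitp x N) = digitp x n.
Proof.
move=> le_nN; apply/polyP => i; rewrite coef_take_poly !coef_digitp.
by case: ltnP => // lt_in; rewrite (leq_trans lt_in).
Qed.

Lemma coef_digitp_cube x n N k : (k < n <= N)%N ->
  ((digitp x N) ^+ 3)`_k = ((digitp x n) ^+ 3)`_k.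
Proof.
case/andP=> lt_kn le_nN; rewrite -(poly_take_drop n (digitp x N)) take_digitp //.
set A := digitp x n; set S := drop_poly n _.
have -> : (A + S * 'X^n) ^+ 3 =
    A ^+ 3 + (A ^+ 2 * S *+ 3 + A * S ^+ 2 * 'X^n *+ 3 + S ^+ 3 * 'X^n * 'X^n) * 'X^n.
  by rewrite !exprS expr0; ring.
by rewrite coefD coefMXn lt_kn addr0.
Qed.

Definition cube_coef x k : int := ((digitp x k.+1) ^+ 3)`_k.

Definition cube_carry (x : nat -> nat) k : int :=
  let X i := (x i)%:Z in
  if k == 0%N then 0 else if k == 1%N then X 0%N ^+ 2 * X 1%N
  else if k == 2%N then X 0%N ^+ 2 * X 2%N + X 0%N * X 1%N ^+ 2
  else X 0%N ^+ 2 * X k + 2 * X 0%N * X 1%N * X k.-1.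

Definition cube_local (x : nat -> nat) k : int :=
  if k == 0%N then (x 0%N)%:Z ^+ 3 else if (k <= 2)%N then 0 else Pkj k k.-1 x.

Lemma cube_coef_small x k : (k <= 2)%N -> cube_coef x k = 3 * cube_carry x k + cube_local x k.
Proof.
rewrite /cube_coef /cube_carry /cube_local.
case: k => [|[|[|k]]] // _ /=; rewrite !exprS expr0 mulr1 !coefM !big_ord_recr !big_ord0 /=;
  rewrite ?coefM !big_ord_recr ?big_ord0 /= !coef_digitp /=; ring.
Qed.

(* Write x_0 + ... + x_k t^k = Q + V t^(k-1) with size Q = k - 1: as 2(k-1) > k,
   only Q^3 and 3 Q^2 V t^(k-1) reach t^k. *)
Lemma cube_coef_large x k : (3 <= k)%N -> cube_coef x k = 3 * cube_carry x k + cube_local x k.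
Proof.
case: k => [|[|[|j]]] // _; rewrite /cube_coef /cube_carry /cube_local /= Pkj_coef.
rewrite (digitpS x j.+3) (digitpS x j.+2).
set Q := digitp x j.+2; set V : {poly int} := (x j.+2)%:Z%:P + (x j.+3)%:Z *: 'X.
have -> : Q + (x j.+2)%:Z *: 'X^(j.+2) + (x j.+3)%:Z *: 'X^(j.+3) = Q + V * 'X^(j.+2).
  by rewrite /V mulrDl mul_polyC -scalerAl -exprS addrA.
have -> : (Q + V * 'X^(j.+2)) ^+ 3 = Q ^+ 3 + Q ^+ 2 * V *+ 3 * 'X^(j.+2) +
     (Q * V ^+ 2 *+ 3 + V ^+ 3 * 'X^(j.+2)) * 'X^(j.+2 + j.+2).
  by rewrite exprD !exprS expr0; ring.
rewrite !coefD !coefMXn ltnNge leqW //= ifT; last by lia.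
rewrite subSn // subnn addr0 coefMn !exprS expr0 mulr1 !coefM !big_ord_recr !big_ord0 /=.
rewrite !coefM !big_ord_recr !big_ord0 /= !coef_digitp /= !coefD !coefC !coefZ !coefX /=.
ring.
Qed.

Lemma cube_coefE x k : cube_coef x k = 3 * cube_carry x k + cube_local x k.
Proof. by case: (leqP k 2) => [/cube_coef_small | /cube_coef_large]. Qed.

Lemma dvdz_cube_trunc3 x N :
  (3 ^+ N %| trunc3 x N ^+ 3 - \sum_(k < N) (cube_carry x k.-1 + cube_local x k) * 3 ^+ k)%Z.
Proof.
have telescope : \sum_(k < N) cube_coef x k * 3 ^+ k =
    \sum_(k < N) (cube_carry x k.-1 + cube_local x k) * 3 ^+ k + cube_carry x N.-1 * 3 ^+ N.
  elim: N => [|N IH]; first by rewrite !big_ord0 /cube_carry /= mul0r addr0.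
  by rewrite !big_ord_recr /= IH cube_coefE exprS; ring.
rewrite -horner_digitp -horner_exp.
rewrite (canRL (addrK _) (esym telescope)) opprB addrCA rpredD ?dvdz_mull //.
rewrite (eq_bigr (fun k : 'I_N => ((digitp x N) ^+ 3)`_k * 3 ^+ k)); last first.
  by move=> k _; rewrite /cube_coef (@coef_digitp_cube x k.+1 N) ?ltnSn ?ltn_ord.
exact: dvdz_horner_trunc.
Qed.

Definition convol (a x : nat -> nat) j : int :=
  \sum_(i < j.+1) (x (j - i)%N)%:Z * (a i)%:Z.

Lemma coef_digitp_mul a x N i : (i < N)%N -> (digitp a N * digitp x N)`_i = convol a x i.
Proof.
move=> lt_iN; rewrite coefM; apply: eq_bigr => j _; rewrite !coef_digitp mulrC.
by rewrite !(leq_ltn_trans _ lt_iN) ?leq_subr // -ltnS.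
Qed.

Lemma sum_shift_exp (R : comPzRingType) (c : R) (F : nat -> R) m N :
  \sum_(k < N) (if (m <= k)%N then F (k - m)%N else 0) * c ^+ k =
  c ^+ m * \sum_(i < N - m) F i * c ^+ i.
Proof.
elim: N => [|N IH]; first by rewrite !big_ord0 mulr0.
rewrite big_ord_recr /= IH; case: (leqP m N) => [le_mN | lt_Nm].
  by rewrite subSn // big_ord_recr mulrDr /= mulrCA -exprD subnKC.
by rewrite mul0r addr0 (_ : N.+1 - m = N - m)%N //; lia.
Qed.

Lemma dvdz_linear_trunc3 m a x N :
  (3 ^+ N %| 3 ^+ m * trunc3 a N * trunc3 x N -
     \sum_(k < N) (if (m <= k)%N then convol a x (k - m) else 0) * 3 ^+ k)%Z.
Proof.
rewrite sum_shift_exp -mulrA -mulrBr.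
apply: (@dvdz_trans (3 ^+ m * 3 ^+ (N - m))); first by rewrite -exprD dvdz_exp2l //; lia.
rewrite dvdz_mul2l ?expf_neq0 // -!horner_digitp -hornerM.
rewrite (eq_bigr (fun i : 'I_(N - m) => (digitp a N * digitp x N)`_i * 3 ^+ i)).
  exact: dvdz_horner_trunc.
by move=> i _; rewrite coef_digitp_mul // (leq_trans (ltn_ord i)) ?leq_subr.
Qed.

Definition digit_lhs m (a x : nat -> nat) k : int :=
  if k == 0%N then (x 0%N)%:Z ^+ 3 else if k == 1%N then 0 else Lhs m a x k.

Lemma digit_lhsE m a x k : (4 <= m)%N -> digit_lhs m a x k =
  cube_carry x k.-1 + cube_local x k + (if (m <= k)%N then convol a x (k - m) else 0).
Proof.
rewrite /digit_lhs /cube_carry /cube_local /Lhs /convol => le4m.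
case: k => [|[|[|[|k]]]] /=; last by rewrite !subSS subn0; case: ifP; rewrite ?addr0 => _; ring.
all: rewrite ifF ?addr0 //; try ring; lia.
Qed.

Lemma dvdz_cubic_trunc3 m a x N : (4 <= m)%N ->
  (3 ^+ N %| trunc3 x N ^+ 3 + 3 ^+ m * trunc3 a N * trunc3 x N -
     \sum_(k < N) digit_lhs m a x k * 3 ^+ k)%Z.
Proof.
move=> le4m; under eq_bigr => k _ do rewrite digit_lhsE // mulrDl.
rewrite big_split /= opprD addrACA.
exact: rpredD (dvdz_cube_trunc3 x N) (dvdz_linear_trunc3 m a x N).
Qed.

Lemma eqz_mod_dvdP (d u v : int) : (u = v %[mod d])%Z <-> (d %| u - v)%Z.
Proof. by rewrite -eqz_mod_dvd; split=> /eqP. Qed.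

Lemma cubic_sol3_iff m a b x : (4 <= m)%N -> cubic_sol3 m a b x <->
  forall N, (3 ^+ N %| \sum_(k < N) (digit_lhs m a x k - (b k)%:Z) * 3 ^+ k)%Z.
Proof.
move=> le4m.
have sol_dvdE N : (trunc3 x N ^+ 3 + 3 ^+ m * trunc3 a N * trunc3 x N = trunc3 b N
    %[mod 3 ^+ N])%Z <-> (3 ^+ N %| \sum_(k < N) (digit_lhs m a x k - (b k)%:Z) * 3 ^+ k)%Z.
  rewrite eqz_mod_dvdP -[in X in _ <-> X](rpredDl _ (dvdz_cubic_trunc3 a x N le4m)).
  by rewrite (eq_bigr _ (fun k _ => mulrBl _ _ _)) sumrB addrA subrK.
by split=> sol N; apply/sol_dvdE.
Qed.

Section Carries.
Variables (c : int) (e M : nat -> int).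
Hypothesis c_neq0 : c != 0.
Let S N := \sum_(k < N) e k * c ^+ k.
Hypothesis M1 : M 1%N = (S 2 %/ c ^+ 2)%Z.
Hypothesis MS : forall k, (2 <= k)%N -> M k = ((e k + M k.-1) %/ c)%Z.

Lemma sum_carry2 : (c ^+ 2 %| S 2)%Z -> S 2 = c ^+ 2 * M 1.
Proof. by move=> dvdS2; rewrite M1 mulrC divzK. Qed.

Lemma dvdz_sum_carryS k : S k = c ^+ k * M k.-1 ->
  (c ^+ k.+1 %| S k.+1)%Z = (c %| e k + M k.-1)%Z.
Proof.
move=> Sk; rewrite /S big_ord_recr /= -/(S k) Sk [e k * _]mulrC -mulrDr addrC exprSr.
by rewrite dvdz_mul2l ?expf_neq0.
Qed.

Lemma sum_carryS k : (2 <= k)%N -> S k = c ^+ k * M k.-1 ->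
  (c %| e k + M k.-1)%Z -> S k.+1 = c ^+ k.+1 * M k.
Proof.
move=> le2k Sk dvd_k; rewrite /S big_ord_recr /= -/(S k) Sk [e k * _]mulrC -mulrDr addrC exprSr.
by rewrite (MS le2k) -mulrA [c * _]mulrC divzK.
Qed.

Lemma dvdz_partial_sums_iff : (forall N, c ^+ N %| S N)%Z <->
  [/\ (c %| S 1)%Z, (c ^+ 2 %| S 2)%Z & forall k, (2 <= k)%N -> (c %| e k + M k.-1)%Z].
Proof.
split=> [dvdS | [dvdS1 dvdS2 dvd_k]].
  have Sk j : S j.+2 = c ^+ j.+2 * M j.+1.
    elim: j => [|j IH]; first exact: sum_carry2.
    by apply: sum_carryS => //; rewrite -dvdz_sum_carryS.
  split=> [||[|[|j]] // _]; [exact: (dvdS 1%N) | exact: dvdS |].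
  by rewrite -(dvdz_sum_carryS (Sk j)).
have Sk j : S j.+2 = c ^+ j.+2 * M j.+1.
  elim: j => [|j IH]; first exact: sum_carry2.
  exact: sum_carryS _ IH (dvd_k _ _).
case=> [|[|j]]; rewrite ?expr0 ?dvd1z //.
by rewrite Sk dvdz_mulr.
Qed.

End Carries.

Lemma Mk1E m a b x :
  Mk m a b x 1 = ((\sum_(k < 2) (digit_lhs m a x k - (b k)%:Z) * 3 ^+ k) %/ 3 ^+ 2)%Z.
Proof. by rewrite !big_ord_recr big_ord0 /=; congr (_ %/ _)%Z; ring. Qed.

Lemma MkE m a b x k : (2 <= k)%N ->
  Mk m a b x k = ((digit_lhs m a x k - (b k)%:Z + Mk m a b x k.-1) %/ 3)%Z.
Proof. by case: k => [|[|k]]. Qed.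

Lemma congruences36_iff m a b x : congruences36 m a b x <->
  [/\ (3 %| \sum_(k < 1) (digit_lhs m a x k - (b k)%:Z) * 3 ^+ k)%Z,
      (3 ^+ 2 %| \sum_(k < 2) (digit_lhs m a x k - (b k)%:Z) * 3 ^+ k)%Z &
      forall k, (2 <= k)%N -> (3 %| digit_lhs m a x k - (b k)%:Z + Mk m a b x k.-1)%Z].
Proof.
have S1E : \sum_(k < 1) (digit_lhs m a x k - (b k)%:Z) * 3 ^+ k = (x 0%N)%:Z ^+ 3 - (b 0%N)%:Z.
  by rewrite big_ord1 mulr1.
have S2E : \sum_(k < 2) (digit_lhs m a x k - (b k)%:Z) * 3 ^+ k =
    (x 0%N)%:Z ^+ 3 - ((b 0%N)%:Z + 3 * (b 1%N)%:Z).
  by rewrite !big_ord_recr big_ord0 /=; ring.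
have congr_kE k : (2 <= k)%N -> (Lhs m a x k + Mk m a b x k.-1 = (b k)%:Z %[mod 3])%Z <->
    (3 %| digit_lhs m a x k - (b k)%:Z + Mk m a b x k.-1)%Z.
  by case: k => [|[|k]] // _; rewrite eqz_mod_dvdP addrAC.
rewrite /congruences36 S1E S2E !eqz_mod_dvdP (_ : 3 ^+ 2 = 9) //.
split=> [[c1 [c2 ck]] | [c1 c2 ck]]; do ![split] => // k le2k; exact/congr_kE/ck.
Qed.

Theorem theorem3p6 (m : nat) (a b x : nat -> nat) :
  digits3 a -> a 0%N != 0%N ->
  digits3 b -> b 0%N != 0%N ->
  (4 <= m)%N ->
  ((b 0%N, b 1%N) = (1%N, 0%N) \/ (b 0%N, b 1%N) = (2%N, 2%N)) ->
  digits3 x -> x 0%N != 0%N ->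
  (cubic_sol3 m a b x <-> congruences36 m a b x).
Proof.
move=> _ _ _ _ le4m _ _ _.
rewrite cubic_sol3_iff // congruences36_iff.
exact: dvdz_partial_sums_iff (Mk1E m a b x) (@MkE m a b x).
Qed.
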